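(* Let $n\ge 2$ be an integer. Let $\sigma\in S_n$ be the cycle $(1,2,\dots,n-1)$ and let $\rho\in S_n$ be defined by $\rho(n-1)=n$, $\rho(n)=n-1$ and $\rho(k)=n-1-k$ for $1\le k\le n-2$. Then $IK_n$ is a $G$-graph if and only if there exists a permutation $\tau\in S_n$ of order $2$ such that $\tau(n)=n-1$ and $$\tau\sigma^k\tau=\sigma^{\tau(k)}\,\tau\,\sigma^{\tau\rho\tau(k)}\quad\text{for all }k\in\{1,\dots,n-2\}.$$ In that case, $IK_n\cong\Phi(\langle\sigma,\tau\rangle,\{\sigma,\tau\})$.
   Context: $S_n$ is the symmetric group on $\{1,\dots,n\}$, with product given by composition of functions (the rightmost factor is applied first). $K_n$ is the complete simple graph on $n$ vertices, and $IK_n$ is its incidence graph: the simple graph whose vertices are the vertices and edges of $K_n$, each edge of $K_n$ being adjacent exactly to its two end-points. For a group $G$ and a multiset $S$ of elements of $G$, $\Phi(G,S)$ is the multigraph whose vertex set is the union over the members $s$ of $S$ (with multiplicity) of the right cosets $\langle s\rangle x$, $x\in G$, with one edge labeled $g$ between $\langle s\rangle x$ and $\langle t\rangle y$ ($s,t$ distinct members of $S$) for each $g\in\langle s\rangle x\cap\langle t\rangle y$, and no other edges; a $G$-graph is a multigraph isomorphic (ignoring labels) to some $\Phi(G,S)$. *)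

From mathcomp Require Import all_boot all_fingroup.
Set Implicit Arguments.
Unset Strict Implicit.
Unset Printing Implicit Defensive.
Import GroupScope.

(* Paper label of an element of 'I_n : the paper works on {1,...,n},
   MathComp on 'I_n = {0,...,n-1}; i : 'I_n stands for the paper's i+1. *)
Definition lab (n : nat) (i : 'I_n) : nat := i.+1.

Definition mg_iso (V1 V2 : finType) (A1 : {set V1}) (m1 : V1 -> V1 -> nat)
    (A2 : {set V2}) (m2 : V2 -> V2 -> nat) : Prop :=
  exists f : V1 -> V2,
    [/\ {in A1 &, injective f}, f @: A1 = A2 &
        {in A1 &, forall a b, m2 (f a) (f b) = m1 a b}].

(* The incidence graph IK_n: vertices of K_n (inl i) and edges of K_n
   (inr e with e a 2-subset), an edge of K_n adjacent to its two endpoints. *)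
Definition IKV (n : nat) := ('I_n + {set 'I_n})%type.
Definition IK_verts (n : nat) : {set IKV n} :=
  [set v : IKV n | match v with inl _ => true | inr e => #|e| == 2 end].
Definition IK_mult (n : nat) (u v : IKV n) : nat :=
  match u, v with
  | inl i, inr e => nat_of_bool (i \in e)
  | inr e, inl i => nat_of_bool (i \in e)
  | _, _ => 0
  end.

(* Phi(G,S): S is a multiset, given as a sequence; its members are indexed
   by 'I_(size S).  A vertex is a pair (i, C) with C a coset of <[S_i]> in G.
   [rightc = true]: C = <[s]> :* x  (right cosets for the product * of gT);
   [rightc = false]: C = x *: <[s]>  (used for permutations). *)
Definition phi_verts (gT : finGroupType) (G : {set gT}) (S : seq gT)
    (rightc : bool) : {set ('I_(size S) * {set gT})} :=
  [set v : 'I_(size S) * {set gT} | v.2 \in (if rightc then rcosets <[nth 1 S v.1]> G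
                    else lcosets <[nth 1 S v.1]> G)].
Definition phi_mult (gT : finGroupType) (S : seq gT)
    (u v : 'I_(size S) * {set gT}) : nat :=
  if u.1 != v.1 then #|u.2 :&: v.2| else 0.

Definition IK_is_Ggraph (n : nat) : Prop :=
  exists (gT : finGroupType) (G : {group gT}) (S : seq gT),
    {subset S <= G} /\
    mg_iso (IK_verts n) (@IK_mult n) (phi_verts G S true) (@phi_mult gT S).

(* The condition on tau from the theorem (paper composition, read as
   function application). *)
Definition tau_cond (n : nat) (sigma rho tau : 'S_n) : Prop :=
  [/\ #[tau] = 2,
      forall i : 'I_n, lab i = n -> lab (tau i) = n.-1 &
      forall i : 'I_n, (1 <= lab i <= n - 2)%N -> forall x : 'I_n,
        tau ((sigma ^+ lab i) (tau x)) =
        (sigma ^+ lab (tau i)) (tau ((sigma ^+ lab (tau (rho (tau i)))) x))].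

(* If tau satisfies the relations, every element of G = <sigma, tau> is sigma^i or
   sigma^i tau sigma^j, and no such element except 1 fixes both n-1 and n; since sigma and
   tau also move any ordered pair of distinct points to (n, n-1), G is sharply
   2-transitive. The stabiliser of n is then <sigma> and that of {n-1, n} is <tau>, so
   sending a point p to the coset of elements mapping p to n, and an edge e to the coset
   of elements mapping e onto {n-1, n}, identifies IK_n with Phi(G, {sigma, tau}).
   Conversely, in a G-graph isomorphic to the bipartite IK_n only two members a, b of S
   occur: the points are the cosets of <a> and the edges those of <b>. Incidence forces
   b to be an involution outside <a> and right multiplication to act sharply
   2-transitively on the n cosets <a> and <a> b a^k. Labelling them so that a acts as
   sigma, b acts as some tau, and each relation holds because its two sides come from
   elements of G inducing the same moves on <a> and <a> b. *)

From mathcomp Require Import all_boot all_fingroup cyclic zify.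
Import GroupScope.
Set Implicit Arguments.
Unset Strict Implicit.

(* The paper's points n and n-1 are the indices m.+1 and m of 'I_m.+2. *)
Definition pt_n m : 'I_m.+2 := ord_max.
Definition pt_n1 m : 'I_m.+2 := Ordinal (leqnSn m.+1).
Definition base_edge m : {set 'I_m.+2} := [set pt_n m; pt_n1 m].

Definition cycle_spec m (sigma : 'S_m.+2) :=
  forall i : 'I_m.+2, val (sigma i) = if i < m.+1 then i.+1 %% m.+1 else i.

Lemma cycle_spec_lab m (sigma : 'S_m.+2) :
  (forall i : 'I_m.+2, lab (sigma i) =
     (if lab i < m.+1 then (lab i).+1 else if lab i == m.+1 then 1 else m.+2)%N) ->
  cycle_spec sigma.
Proof.
move=> sigmaL i; move: (sigmaL i); rewrite /lab ltnS eqSS.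
case: (ltngtP i m) => [lt_im | lt_mi | i_m] [/= ->].
- by rewrite ltnS (ltnW lt_im) modn_small.
- by rewrite ltnNge lt_mi /=; move: (ltn_ord i); lia.
by rewrite i_m ltnSn modnn.
Qed.

(* Only the values of rho at 1, ..., n-2 enter the relations. *)
Definition rho_spec m (rho : 'S_m.+2) := forall i : 'I_m.+2, i < m -> val (rho i) = (m - i).-1.

Lemma rho_spec_lab m (rho : 'S_m.+2) :
  (forall i : 'I_m.+2, lab (rho i) =
     (if lab i == m.+1 then m.+2 else if lab i == m.+2 then m.+1 else m.+1 - lab i)%N) ->
  rho_spec rho.
Proof.
move=> rhoL i lt_im; move: (rhoL i); rewrite /lab !eqSS ltn_eqF ?ltn_eqF //; last exact: ltnW.
by rewrite subSS => <-.
Qed.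

Lemma pt_n_neq_pt_n1 m : pt_n m != pt_n1 m.
Proof. by rewrite -(inj_eq val_inj) /= gtn_eqF. Qed.

Lemma ltn_pt_n m (i : 'I_m.+2) : (i < m.+1) = (i != pt_n m).
Proof. by rewrite -(inj_eq val_inj) /= ltn_neqAle -ltnS ltn_ord andbT. Qed.

Lemma imset_permM (T : finType) (s t : {perm T}) (A : {set T}) : (s * t) @: A = t @: (s @: A).
Proof. by rewrite -imset_comp; apply: eq_imset => z; rewrite /= permM. Qed.

Lemma imset_perm1 (T : finType) (A : {set T}) : (1 : {perm T}) @: A = A.
Proof. by rewrite -[RHS]imset_id; apply: eq_imset => z; rewrite perm1. Qed.

Lemma cards2_mem (T : finType) (e : {set T}) p :
  #|e| = 2 -> p \in e -> exists2 q, p != q & e = [set p; q].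
Proof.
move/eqP/cards2P=> [x [y [xy ->]]]; rewrite !inE => /orP[] /eqP ->; first by exists y.
by exists x; rewrite 1?eq_sym // setUC.
Qed.

Lemma cards2_eq (T : finType) (e : {set T}) p q :
  #|e| = 2 -> p != q -> p \in e -> q \in e -> e = [set p; q].
Proof.
move=> e2 pq pe qe; apply/eqP; rewrite eq_sym eqEcard subUset !sub1set pe qe.
by rewrite cards2 pq e2.
Qed.

Lemma rcosets_memE (gT : finGroupType) (H : {group gT}) (G : {set gT}) C y :
  C \in rcosets H G -> y \in C -> C = H :* y.
Proof. by case/rcosetsP=> x _ -> y_Hx; apply/esym/rcoset_eqP. Qed.

Lemma in_rcosets (gT : finGroupType) (H G : {set gT}) x : x \in G -> H :* x \in rcosets H G.
Proof. by move=> Gx; apply/rcosetsP; exists x. Qed.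

Lemma self_in_rcosets (gT : finGroupType) (H : {set gT}) (G : {group gT}) :
  H \in rcosets H G.
Proof. by rewrite -{1}(rcoset1 H) in_rcosets. Qed.

Section Cycle.

Variables (m : nat) (sigma : 'S_m.+2).
Hypothesis sigmaE : cycle_spec sigma.

Lemma sigmaX_val j (i : 'I_m.+2) : i < m.+1 -> val ((sigma ^+ j) i) = (i + j) %% m.+1.
Proof.
move=> lt_i; elim: j => [|j IHj]; first by rewrite expg0 perm1 addn0 modn_small.
by rewrite expgSr permM sigmaE IHj ltn_pmod // -addn1 modnDml -addnA addn1.
Qed.

Lemma sigmaX_pt_n j : (sigma ^+ j) (pt_n m) = pt_n m.
Proof.
elim: j => [|j IHj]; first by rewrite expg0 perm1.
by rewrite expgSr permM IHj; apply: val_inj; rewrite sigmaE /= ltnn.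
Qed.

Lemma sigmaX_pt_n1 v : v <= m -> val ((sigma ^+ v.+1) (pt_n1 m)) = v.
Proof. by move=> le_vm; rewrite sigmaX_val //= addnS -addSn addnC modnDr modn_small. Qed.

Lemma sigmaX_pt_n1_neq j : (sigma ^+ j) (pt_n1 m) != pt_n m.
Proof. by rewrite -(sigmaX_pt_n j) (inj_eq perm_inj) eq_sym pt_n_neq_pt_n1. Qed.

Lemma sigmaX_to_pt_n1 x : x != pt_n m -> (sigma ^+ (m - x)) x = pt_n1 m.
Proof.
rewrite -ltn_pt_n => lt_x; apply: val_inj.
by rewrite sigmaX_val //= subnKC ?modn_small.
Qed.

Lemma sigmaX_fix_pt_n1 j : (sigma ^+ j) (pt_n1 m) = pt_n1 m -> sigma ^+ j = 1.
Proof.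
move/(congr1 val); rewrite sigmaX_val //= => jm.
apply/permP => x; rewrite perm1.
have [->|/negPf x_n] := eqVneq x (pt_n m); first exact: sigmaX_pt_n.
have lt_x : x < m.+1 by rewrite ltn_pt_n x_n.
have j0 : j = 0 %[mod m.+1] by apply/eqP; rewrite -(eqn_modDr m) addnC jm modn_small.
by apply: val_inj; rewrite sigmaX_val //= -modnDmr j0 mod0n addn0 modn_small.
Qed.

Lemma sigma_order : sigma ^+ m.+1 = 1.
Proof. by apply: sigmaX_fix_pt_n1; apply: val_inj; rewrite sigmaX_val //= modnDr modn_small. Qed.

End Cycle.

(* [s * t] applies s first: [tau * s * tau] is the paper's tau s tau and
   [s1 * tau * s2] is the paper's s2 tau s1. *)
Lemma tau_condE m (sigma rho tau : 'S_m.+2) :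
  tau_cond sigma rho tau <->
  [/\ tau * tau = 1, tau (pt_n m) = pt_n1 m &
      forall i : 'I_m.+2, i < m ->
        tau * sigma ^+ i.+1 * tau = sigma ^+ (tau (rho (tau i))).+1 * tau * sigma ^+ (tau i).+1].
Proof.
split=> [[tau2 tau_n tau_rel] | [tauK tau_n tau_rel]].
  have tau_n' : tau (pt_n m) = pt_n1 m by apply: val_inj; case: (tau_n (pt_n m) erefl).
  split=> // [|i lt_im]; first by rewrite -expg2 -tau2 expg_order.
  apply/permP=> x; rewrite !permM; apply: tau_rel.
  by rewrite /lab; lia.
split=> [|i [i_n] | i /andP[_ le_im] x]; last first.
- have lt_im : i < m by move: le_im; rewrite /lab; lia.
  by move/permP/(_ x): (tau_rel i lt_im); rewrite !permM.
  by rewrite (_ : i = pt_n m) ?tau_n //; apply: val_inj.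
have tau1 : tau != 1 by apply/eqP=> tau1; move: (pt_n_neq_pt_n1 m); rewrite -tau_n tau1 perm1 eqxx.
apply/eqP; rewrite eqn_leq dvdn_leq ?order_dvdn ?expg2 ?tauK //=.
by rewrite order_gt1.
Qed.

Section Sufficiency.

Variables (m : nat) (sigma tau : 'S_m.+2).
Hypotheses (sigmaE : cycle_spec sigma) (tauK : tau * tau = 1).
Hypothesis tau_pt_n : tau (pt_n m) = pt_n1 m.
Hypothesis tau_sigmaX_tau : forall k, 0 < k < m.+1 ->
  exists i j, tau * sigma ^+ k * tau = sigma ^+ i * tau * sigma ^+ j.

Let G := <<[set sigma; tau]>>.

Let tau_pt_n1 : tau (pt_n1 m) = pt_n m.
Proof. by rewrite -tau_pt_n -permM tauK perm1. Qed.

Lemma sigma_in_G : sigma \in G.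
Proof. by rewrite mem_gen // !inE eqxx. Qed.

Lemma tau_in_G : tau \in G.
Proof. by rewrite mem_gen // !inE eqxx orbT. Qed.

Definition short_word (g : 'S_m.+2) :=
  exists i j, g = sigma ^+ i \/ g = sigma ^+ i * tau * sigma ^+ j.

Lemma short_word_tau_sigmaX_tau j : short_word (tau * sigma ^+ j * tau).
Proof.
rewrite -(expg_mod _ (sigma_order sigmaE)).
have [k0 | k_gt0] := posnP (j %% m.+1).
  by exists 0, 0; left; rewrite k0 expg0 mulg1 tauK.
have /tau_sigmaX_tau[i [i' ->]] : 0 < j %% m.+1 < m.+1 by rewrite k_gt0 ltn_pmod.
by exists i, i'; right.
Qed.

Lemma short_word_mulr g x :
  x \in [set sigma; tau] -> short_word g -> short_word (g * x).
Proof.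
rewrite !inE => /orP[] /eqP -> [i [j [->|->]]].
- by exists i.+1, 0; left; rewrite expgSr.
- by exists i, j.+1; right; rewrite -mulgA -expgSr.
- by exists i, 0; right; rewrite expg0 mulg1.
- have [u [v [E|E]]] := short_word_tau_sigmaX_tau j.
    by exists (i + u), 0; left; rewrite -!mulgA (mulgA tau) E expgD.
  by exists (i + u), v; right; rewrite -!mulgA (mulgA tau) E expgD !mulgA.
Qed.

Lemma G_short_word g : g \in G -> short_word g.
Proof.
case/gen_prodgP=> k [c c_gen ->]; elim: k c c_gen => [|k IHk] c c_gen.
  by rewrite big_ord0; exists 0, 0; left; rewrite expg0.
by rewrite big_ord_recr /=; apply: short_word_mulr => //; apply: IHk.
Qed.

Lemma G_fix_base_eq1 g : g \in G -> g (pt_n m) = pt_n m -> g (pt_n1 m) = pt_n1 m -> g = 1.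
Proof.
case/G_short_word=> i [j [->|->]]; first by move=> _; apply: sigmaX_fix_pt_n1.
rewrite !permM (sigmaX_pt_n sigmaE) tau_pt_n => fix_n.
by have := sigmaX_pt_n1_neq sigmaE j; rewrite fix_n eqxx.
Qed.

Lemma G_eq_on_base g h : g \in G -> h \in G ->
  g (pt_n m) = h (pt_n m) -> g (pt_n1 m) = h (pt_n1 m) -> g = h.
Proof.
move=> Gg Gh gh_n gh_n1; apply/eqP; rewrite eq_mulgV1; apply/eqP.
by apply: G_fix_base_eq1; rewrite ?groupM ?groupV // permM ?gh_n ?gh_n1 permK.
Qed.

Lemma G_to_pt_n p : exists2 g, g \in G & g p = pt_n m.
Proof.
have [->|p_n] := eqVneq p (pt_n m); first by exists 1; rewrite ?group1 ?perm1.
exists (sigma ^+ (m - p) * tau); first by rewrite groupM ?groupX ?sigma_in_G ?tau_in_G.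
by rewrite permM sigmaX_to_pt_n1.
Qed.

Lemma G_to_base p q : p != q -> exists2 g, g \in G & g p = pt_n m /\ g q = pt_n1 m.
Proof.
move=> pq; have [g Gg gp] := G_to_pt_n p.
have gq_n : g q != pt_n m by rewrite -gp (inj_eq perm_inj) eq_sym.
exists (g * sigma ^+ (m - g q)); first by rewrite groupM ?groupX ?sigma_in_G.
by rewrite !permM gp (sigmaX_pt_n sigmaE) sigmaX_to_pt_n1.
Qed.

Lemma G_stab_pt_n g : g \in G -> g (pt_n m) = pt_n m -> g \in <[sigma]>.
Proof.
move=> Gg g_n.
have : g (pt_n1 m) != pt_n m by rewrite -g_n (inj_eq perm_inj) eq_sym pt_n_neq_pt_n1.
rewrite -ltn_pt_n ltnS => g_n1.
suff -> : g = sigma ^+ (g (pt_n1 m)).+1 by apply: mem_cycle.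
apply: G_eq_on_base; rewrite ?groupX ?sigma_in_G ?(sigmaX_pt_n sigmaE) //.
by apply: val_inj; rewrite sigmaX_pt_n1.
Qed.

Lemma tauX_base_edge i : (tau ^+ i) @: base_edge m = base_edge m.
Proof.
elim: i => [|i IHi]; first by rewrite expg0 imset_perm1.
rewrite expgSr imset_permM IHi imsetU1 imset_set1 tau_pt_n tau_pt_n1.
by rewrite /base_edge setUC.
Qed.

Lemma G_stab_base_edge g : g \in G -> g @: base_edge m = base_edge m -> g \in <[tau]>.
Proof.
move=> Gg g_e.
have g_n : g (pt_n m) \in base_edge m by rewrite -g_e imset_f // !inE eqxx.
have g_n1 : g (pt_n1 m) \in base_edge m by rewrite -g_e imset_f // !inE eqxx orbT.
have g_neq : g (pt_n m) != g (pt_n1 m) by rewrite (inj_eq perm_inj) pt_n_neq_pt_n1.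
move: g_n g_n1 g_neq; rewrite !inE.
case/orP=> /eqP g_n; case/orP=> /eqP g_n1; rewrite g_n g_n1 ?eqxx // => _.
  by rewrite (G_eq_on_base (g := g) (h := 1)) ?group1 ?perm1.
by rewrite (G_eq_on_base (g := g) (h := tau)) ?tau_in_G ?cycle_id ?g_n ?g_n1.
Qed.

Lemma G_eq_on_pair g h p q : g \in G -> h \in G -> p != q ->
  g p = h p -> g q = h q -> g = h.
Proof.
move=> Gg Gh pq gh_p gh_q; have [x Gx [xp xq]] := G_to_base pq.
apply: (mulgI x^-1); apply: G_eq_on_base; rewrite ?groupM ?groupV //.
  by rewrite !permM -xp !permK.
by rewrite !permM -xq !permK.
Qed.

Lemma G_to_base_edge (e : {set 'I_m.+2}) :
  #|e| = 2 -> exists2 x, x \in G & x @: e = base_edge m.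
Proof.
move/eqP/cards2P=> [p [q [pq ->]]]; have [x Gx [xp xq]] := G_to_base pq.
by exists x; rewrite // imsetU1 imset_set1 xp xq.
Qed.

Definition point_coset p := [set g in G | g p == pt_n m].
Definition edge_coset (e : {set 'I_m.+2}) := [set g in G | g @: e == base_edge m].

Lemma point_cosetE x p : x \in G -> x p = pt_n m -> point_coset p = x *: <[sigma]>.
Proof.
move=> Gx xp; apply/setP=> g; rewrite inE mem_lcoset.
apply/andP/idP=> [[Gg /eqP gp] | sigma_g].
  by apply: G_stab_pt_n; rewrite ?groupM ?groupV // permM -{1}xp permK.
have Gg : x^-1 * g \in G by apply: subsetP sigma_g; rewrite cycle_subG sigma_in_G.
rewrite -(mulKVg x g) groupM //; case/cycleP: sigma_g => i ->.
by rewrite permM xp (sigmaX_pt_n sigmaE).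
Qed.

Lemma edge_cosetE x (e : {set 'I_m.+2}) :
  x \in G -> x @: e = base_edge m -> edge_coset e = x *: <[tau]>.
Proof.
move=> Gx xe; apply/setP=> g; rewrite inE mem_lcoset.
apply/andP/idP=> [[Gg /eqP ge] | tau_g].
  have xVe : x^-1 @: base_edge m = e by rewrite -xe -imset_permM mulgV imset_perm1.
  by apply: G_stab_base_edge; rewrite ?groupM ?groupV // imset_permM xVe.
have Gg : x^-1 * g \in G by apply: subsetP tau_g; rewrite cycle_subG tau_in_G.
rewrite -(mulKVg x g) groupM //; case/cycleP: tau_g => i ->.
by rewrite imset_permM xe tauX_base_edge.
Qed.

Lemma card_point_edge_coset p (e : {set 'I_m.+2}) :
  #|e| = 2 -> #|point_coset p :&: edge_coset e| = nat_of_bool (p \in e).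
Proof.
move=> e2; have [pe | pNe] := boolP (p \in e); last first.
  apply/eqP; rewrite cards_eq0; apply/eqP/setP=> h; rewrite !inE.
  apply/negP=> /andP[/andP[_ /eqP hp] /andP[_ /eqP he]].
  have /imsetP[r re] : pt_n m \in h @: e by rewrite he !inE eqxx.
  by rewrite -hp => /perm_inj rp; rewrite rp re in pNe.
have [q pq e_pq] := cards2_mem e2 pe.
have [g Gg [gp gq]] := G_to_base pq.
suff -> : point_coset p :&: edge_coset e = [set g] by rewrite cards1.
apply/setP=> h; rewrite !inE; apply/idP/eqP=> [|->]; last first.
  by rewrite Gg gp e_pq imsetU1 imset_set1 gp gq !eqxx.
case/andP=> /andP[Gh /eqP hp] /andP[_ /eqP he].
have : h q \in base_edge m by rewrite -he imset_f // e_pq !inE eqxx orbT.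
rewrite !inE -hp (inj_eq perm_inj) eq_sym (negPf pq) /= => /eqP hq.
by apply: (G_eq_on_pair Gh Gg pq); rewrite ?hp ?hq.
Qed.

Lemma point_coset_inj : injective point_coset.
Proof.
move=> p q pq; have [g Gg gp] := G_to_pt_n p.
have : g \in point_coset q by rewrite -pq inE Gg gp eqxx.
by rewrite inE -gp => /andP[_ /eqP /perm_inj].
Qed.

Lemma edge_coset_inj (e e' : {set 'I_m.+2}) :
  #|e| = 2 -> edge_coset e = edge_coset e' -> e = e'.
Proof.
move=> e2 ee'; have [x Gx xe] := G_to_base_edge e2.
have : x \in edge_coset e' by rewrite -ee' inE Gx xe eqxx.
by rewrite inE -xe => /andP[_ /eqP /esym /imset_inj->] //; apply: perm_inj.
Qed.

Lemma lcosetE_point_coset x : x \in G -> x *: <[sigma]> = point_coset (x^-1 (pt_n m)).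
Proof. by move=> Gx; rewrite (point_cosetE Gx) ?permKV. Qed.

Lemma lcosetE_edge_coset x : x \in G -> x *: <[tau]> = edge_coset (x^-1 @: base_edge m).
Proof. by move=> Gx; rewrite (edge_cosetE Gx) // -imset_permM mulVg imset_perm1. Qed.

Lemma card_base_edge_perm (x : 'S_m.+2) : #|x @: base_edge m| = 2.
Proof. by rewrite card_imset ?cards2 ?pt_n_neq_pt_n1 //; apply: perm_inj. Qed.

Definition IK_to_phi (v : IKV m.+2) : 'I_2 * {set 'S_m.+2} :=
  match v with inl p => (ord0, point_coset p) | inr e => (ord_max, edge_coset e) end.

Lemma IK_iso_phi_lcosets :
  mg_iso (IK_verts m.+2) (@IK_mult m.+2)
    (phi_verts G [:: sigma; tau] false) (@phi_mult _ [:: sigma; tau]).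
Proof.
exists IK_to_phi; split.
- move=> [p|e] [q|e'] u_in v_in [] // => [/point_coset_inj -> // | ee'].
  by move: u_in; rewrite inE => /eqP/edge_coset_inj/(_ ee')->.
- apply/setP=> [[i C]]; rewrite inE; apply/imsetP/idP=> [[[p|e] v_in [-> ->]] | /=].
  + have [x Gx xp] := G_to_pt_n p.
    by apply/lcosetsP; exists x; rewrite // (point_cosetE Gx xp).
  + move: v_in; rewrite inE => /eqP/G_to_base_edge[x Gx xe].
    by apply/lcosetsP; exists x; rewrite // (edge_cosetE Gx xe).
  case: i => [[|[|//]] i2] /= /lcosetsP[x Gx ->].
    exists (inl (x^-1 (pt_n m))); rewrite ?inE // (lcosetE_point_coset Gx).
    by congr pair; apply: val_inj.
  exists (inr (x^-1 @: base_edge m)); first by rewrite inE card_base_edge_perm.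
  by rewrite (lcosetE_edge_coset Gx); congr pair; apply: val_inj.
- move=> [p|e] [q|e'] u_in v_in //=; rewrite /phi_mult /=.
    by move: v_in; rewrite inE => /eqP/card_point_edge_coset->.
  by move: u_in; rewrite inE setIC => /eqP/card_point_edge_coset->.
Qed.

End Sufficiency.

Lemma tau_cond_IK_iso m (sigma rho tau : 'S_m.+2) :
  cycle_spec sigma -> tau_cond sigma rho tau ->
  mg_iso (IK_verts m.+2) (@IK_mult m.+2)
    (phi_verts <<[set sigma; tau]>> [:: sigma; tau] false) (@phi_mult _ [:: sigma; tau]).
Proof.
move=> sigmaE /tau_condE[tauK tau_n tau_rel].
apply: IK_iso_phi_lcosets => // -[|k] // /andP[_ lt_km].
have lt_k : k < m.+2 by lia.
by eexists; eexists; apply: (tau_rel (Ordinal lt_k)).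
Qed.

(* Inversion maps left cosets x <s> to right cosets <s> x^-1 and preserves intersections. *)
Lemma mg_iso_phi_rcosets (gT : finGroupType) (G : {group gT}) (S : seq gT)
    (V : finType) (A : {set V}) (mA : V -> V -> nat) :
  mg_iso A mA (phi_verts G S false) (@phi_mult gT S) ->
  mg_iso A mA (phi_verts G S true) (@phi_mult gT S).
Proof.
move=> [f [f_inj f_onto f_mult]].
exists (fun v => ((f v).1, ((f v).2)^-1)); split.
- move=> u v u_in v_in [eq1 /(congr1 (fun C => C^-1))]; rewrite !invgK => eq2.
  by apply: f_inj => //; case: (f u) (f v) eq1 eq2 => ? ? [? ?] /= -> ->.
- apply/setP=> [[i C]]; rewrite inE /=; apply/imsetP/idP=> [[v v_in [-> ->]] | ].
    have : f v \in phi_verts G S false by rewrite -f_onto imset_f.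
    rewrite inE /= => /lcosetsP[x Gx ->].
    by rewrite invg_lcoset; apply/rcosetsP; exists x^-1; rewrite ?groupV.
  case/rcosetsP=> x Gx C_def.
  have : (i, x^-1 *: <[nth 1 S i]>) \in phi_verts G S false.
    by rewrite inE /=; apply/lcosetsP; exists x^-1; rewrite ?groupV.
  rewrite -f_onto => /imsetP[v v_in fv]; exists v => //.
  by rewrite -fv /= invg_lcoset invgK C_def.
- move=> u v u_in v_in; rewrite -f_mult // /phi_mult /=.
  by case: ifP => // _; rewrite -invIg card_invg.
Qed.

Lemma tau_relation_at_base m (sigma rho tau : 'S_m.+2) (i : 'I_m.+2) :
  cycle_spec sigma -> rho_spec rho -> tau * tau = 1 -> tau (pt_n m) = pt_n1 m -> i < m ->
  let g := tau * sigma ^+ i.+1 * tau in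
  let h := sigma ^+ (tau (rho (tau i))).+1 * tau * sigma ^+ (tau i).+1 in
  g (pt_n m) = h (pt_n m) /\ g (pt_n1 m) = h (pt_n1 m).
Proof.
move=> sigmaE rhoE tauK tau_n lt_im g h.
have tauK' x : tau (tau x) = x by rewrite -permM tauK perm1.
have tau_n1 : tau (pt_n1 m) = pt_n m by rewrite -tau_n tauK'.
set j := tau i.
have lt_jm : j < m.
  have : (tau j != tau (pt_n m)) && (tau j != tau (pt_n1 m)).
    by rewrite tauK' tau_n tau_n1 -!(inj_eq val_inj) /=; lia.
  rewrite !(inj_eq (@perm_inj _ tau)) -!(inj_eq val_inj) /=.
  by move: (ltn_ord j); lia.
split; rewrite /g /h !permM ?tau_n ?tau_n1 (sigmaX_pt_n sigmaE) ?tau_n.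
  have -> : (sigma ^+ i.+1) (pt_n1 m) = i by apply: val_inj; rewrite sigmaX_pt_n1 // ltnW.
  by apply: val_inj; rewrite sigmaX_pt_n1 // ltnW.
have rho_j : nat_of_ord (rho j) = (m - j).-1 := rhoE j lt_jm.
have k_n : tau (rho j) != pt_n m.
  by rewrite -(inj_eq (@perm_inj _ tau)) tauK' tau_n -(inj_eq val_inj) /= rho_j; lia.
have -> : (sigma ^+ (tau (rho j)).+1) (pt_n1 m) = tau (rho j).
  by apply: val_inj; rewrite sigmaX_pt_n1 // -ltnS ltn_pt_n.
apply: val_inj; rewrite tauK' (sigmaX_val sigmaE) -/j rho_j /=; last by lia.
have -> : (m - j).-1 + j.+1 = m by lia.
by rewrite modn_small.
Qed.

Section Necessity.

(* pV and pE are an isomorphism of IK_n onto Phi(G, {a, b}), read on each colour class. *)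
Variables (gT : finGroupType) (G : {group gT}) (a b : gT) (m : nat).
Variables (pV : 'I_m.+2 -> {set gT}) (pE : {set 'I_m.+2} -> {set gT}).
Local Notation A := <[a]>.
Local Notation B := <[b]>.
Hypotheses (aG : a \in G) (bG : b \in G) (pV_inj : injective pV).
Hypothesis pV_onto : forall C, C \in rcosets A G -> exists p, pV p = C.
Hypothesis pV_in : forall p, pV p \in rcosets A G.
Hypothesis pE_onto : forall D, D \in rcosets B G -> exists2 e : {set 'I_m.+2}, #|e| = 2 & pE e = D.
Hypothesis pE_in : forall e : {set 'I_m.+2}, #|e| = 2 -> pE e \in rcosets B G.
Hypothesis card_pV_pE :
  forall p (e : {set 'I_m.+2}), #|e| = 2 -> #|pV p :&: pE e| = nat_of_bool (p \in e).

Lemma incident p (e : {set 'I_m.+2}) y : #|e| = 2 -> y \in pV p -> y \in pE e -> p \in e.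
Proof.
move=> e2 y_p y_e; have := card_pV_pE p e2.
case: (p \in e) => // /eqP; rewrite cards_eq0 => /eqP pe0.
have : y \in pV p :&: pE e by rewrite inE y_p.
by rewrite pe0 inE.
Qed.

Lemma base_edge_cosets : exists p0 q0, [/\ p0 != q0, pV p0 = A & pE [set p0; q0] = B].
Proof.
have [p0 p0A] := pV_onto (self_in_rcosets A G).
have [e0 e2 e0B] := pE_onto (self_in_rcosets B G).
have /(cards2_mem e2)[q0 p0q0 e0_def] : p0 \in e0.
  by apply: (incident (y := 1)); rewrite ?p0A ?e0B ?group1.
by exists p0, q0; rewrite -e0_def.
Qed.

Lemma rcosets_meet_B p0 q0 C y : p0 != q0 -> pE [set p0; q0] = B ->
  C \in rcosets A G -> y \in C -> y \in B -> C = pV p0 \/ C = pV q0.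
Proof.
move=> p0q0 e0B /pV_onto[r <-] y_r yB.
have : r \in [set p0; q0] by apply: (incident (y := y)); rewrite ?cards2 ?p0q0 ?e0B.
by rewrite !inE => /orP[] /eqP->; [left | right].
Qed.

Lemma b_notin_A : b \notin A.
Proof.
have [p0 [q0 [p0q0 p0A e0B]]] := base_edge_cosets; apply/negP=> bA.
have /card_gt0P[y] : 0 < #|pV q0 :&: B|.
  by rewrite -e0B card_pV_pE ?cards2 ?p0q0 // !inE eqxx orbT.
rewrite inE => /andP[y_q0 yB].
have yA : y \in A by apply: subsetP yB; rewrite cycle_subG.
have q0A : pV q0 = A by rewrite (rcosets_memE (pV_in q0) y_q0) rcoset_id.
by move: p0q0; rewrite -(inj_eq pV_inj) p0A q0A eqxx.
Qed.

Lemma base_vertices :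
  exists p0 q0, [/\ p0 != q0, pV p0 = A, pV q0 = A :* b & pE [set p0; q0] = B].
Proof.
have [p0 [q0 [p0q0 p0A e0B]]] := base_edge_cosets; exists p0, q0; split => //.
have [Ab_p0 | ->] // := rcosets_meet_B p0q0 e0B (in_rcosets A bG) (rcoset_refl A b) (cycle_id b).
by have := b_notin_A; rewrite -p0A -Ab_p0 rcoset_refl.
Qed.

Lemma b_involution : b * b = 1.
Proof.
have [p0 [q0 [p0q0 p0A q0Ab e0B]]] := base_vertices.
have bbB : b * b \in B by rewrite groupM ?cycle_id.
have [Abb | Abb] := rcosets_meet_B p0q0 e0B (in_rcosets A (groupM bG bG)) (rcoset_refl A _) bbB.
  have AB1 : #|A :&: B| <= 1 by rewrite -p0A -e0B card_pV_pE ?cards2 ?p0q0 ?leq_b1.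
  by apply: (card_le1_eqP AB1); rewrite inE ?group1 // -p0A -Abb rcoset_refl.
have : b * b \in A :* b by rewrite -q0Ab -Abb rcoset_refl.
by rewrite mem_rcoset mulgK (negPf b_notin_A).
Qed.

Lemma mem_cycle_b y : y \in B -> y = 1 \/ y = b.
Proof.
have b2 : b ^+ 2 = 1 by rewrite expgS expg1 b_involution.
case/cycleP=> i ->; rewrite -(expg_mod _ b2).
have : i %% 2 < 2 by rewrite ltn_pmod.
by case: (i %% 2) => [|[|]] // _; [left | right]; rewrite ?expg0 ?expg1.
Qed.

Lemma rcoset_A_Ab_fixed h : h \in G -> A :* h = A -> A :* b :* h = A :* b -> h = 1.
Proof.
move=> Gh Ah Abh; have [p0 [q0 [p0q0 p0A q0Ab e0B]]] := base_vertices.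
have [e e2 eBh] := pE_onto (in_rcosets B Gh).
have p0e : p0 \in e.
  apply: (incident (y := h)) => //; first by rewrite p0A -Ah rcoset_refl.
  by rewrite eBh rcoset_refl.
have q0e : q0 \in e.
  apply: (incident (y := b * h)) => //; first by rewrite q0Ab -Abh -rcosetM rcoset_refl.
  by rewrite eBh mem_rcoset mulgK cycle_id.
have hB : h \in B by rewrite -e0B -(cards2_eq e2 p0q0 p0e q0e) eBh rcoset_refl.
have [//|hb] := mem_cycle_b hB.
by have := b_notin_A; rewrite -hb -Ah rcoset_refl.
Qed.

Lemma rcosets_A_other C : C \in rcosets A G -> C != A -> exists i, C = A :* (b * a ^+ i).
Proof.
move=> C_in CA; have [p0 [q0 [p0q0 p0A _ _]]] := base_vertices.
have [q qC] := pV_onto C_in.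
have p0q : p0 != q by apply: contra CA => /eqP p0q; rewrite -qC -p0q p0A.
have e2 : #|[set p0; q]| = 2 by rewrite cards2 p0q.
have /card_gt0P[y] : 0 < #|pV p0 :&: pE [set p0; q]| by rewrite card_pV_pE // !inE eqxx.
rewrite inE p0A => /andP[yA y_e].
have /card_gt0P[z] : 0 < #|pV q :&: pE [set p0; q]| by rewrite card_pV_pE // !inE eqxx orbT.
rewrite inE qC (rcosets_memE (pE_in e2) y_e) => /andP[zC].
rewrite mem_rcoset => /mem_cycle_b[] zy.
  move: CA; rewrite (rcosets_memE C_in zC) -(mulgKV y z) zy mul1g.
  by rewrite rcoset_id ?eqxx.
have [i yi] := cycleP _ _ yA.
by exists i; rewrite (rcosets_memE C_in zC) -yi -zy mulgKV.
Qed.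

Lemma G_eq_of_rcosets g1 g2 : g1 \in G -> g2 \in G ->
  A :* g1 = A :* g2 -> A :* b :* g1 = A :* b :* g2 -> g1 = g2.
Proof.
move=> Gg1 Gg2 A12 Ab12; apply/eqP; rewrite eq_mulgV1; apply/eqP.
by apply: rcoset_A_Ab_fixed; rewrite ?groupM ?groupV // rcosetM ?A12 ?Ab12 -rcosetM mulgV rcoset1.
Qed.

Lemma rcoset_Ab_aX_inj i j : A :* (b * a ^+ i) = A :* (b * a ^+ j) -> a ^+ i = a ^+ j.
Proof.
move=> eq_ij; apply: G_eq_of_rcosets; rewrite ?groupX // -?rcosetM //.
by rewrite !rcoset_id ?mem_cycle.
Qed.

Lemma rcoset_Ab_aX_neq i : A :* (b * a ^+ i) != A.
Proof.
apply/eqP=> AbA; have : b * a ^+ i \in A by rewrite -AbA rcoset_refl.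
by rewrite groupMr ?mem_cycle // (negPf b_notin_A).
Qed.

Lemma card_rcosets_A : #|rcosets A G| = m.+2.
Proof.
have -> : rcosets A G = pV @: setT.
  apply/setP=> C; apply/idP/imsetP=> [/pV_onto[p <-] | [p _ ->]] //; by exists p.
by rewrite card_imset // cardsT card_ord.
Qed.

Lemma order_a : #[a] = m.+1.
Proof.
have rcosetsE : rcosets A G = A |: [set A :* (b * a ^+ i) | i : 'I_#[a]].
  apply/setP=> C; rewrite !inE; apply/idP/orP=> [C_in | [/eqP-> | /imsetP[i _ ->]]].
  - have [->|CA] := eqVneq C A; [by left | right].
    have [i ->] := rcosets_A_other C_in CA; apply/imsetP.
    by exists (Ordinal (ltn_pmod i (order_gt0 a))); rewrite //= expg_mod_order.
  - exact: self_in_rcosets.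
  by rewrite in_rcosets ?groupM ?groupX.
have /eqP := card_rcosets_A; rewrite rcosetsE cardsU1 card_imset => [|i j /rcoset_Ab_aX_inj/eqP].
  have /negPf-> : A \notin [set A :* (b * a ^+ i) | i : 'I_#[a]].
    by apply/imsetP=> [[i _ /eqP]]; rewrite eq_sym (negPf (rcoset_Ab_aX_neq i)).
  by rewrite card_ord add1n => /eqP[].
by rewrite eq_expg_mod_order !modn_small // => /eqP/val_inj.
Qed.

Variables sigma rho : 'S_m.+2.
Hypotheses (sigmaE : cycle_spec sigma) (rhoE : rho_spec rho).

(* The paper's point n is A and its point k < n is A b a^k: n-1 is A b and sigma acts as a. *)
Definition coset_label (i : 'I_m.+2) := if i == pt_n m then A else A :* (b * a ^+ i.+1).

Lemma coset_label_in i : coset_label i \in rcosets A G.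
Proof.
rewrite /coset_label; case: ifP => _; first exact: self_in_rcosets.
by rewrite in_rcosets ?groupM ?groupX.
Qed.

Lemma coset_label_inj : injective coset_label.
Proof.
move=> i j; rewrite /coset_label.
case: eqP => [-> | /eqP i_n]; case: eqP => [-> | /eqP j_n] eq_ij //.
- by have := rcoset_Ab_aX_neq j.+1; rewrite -eq_ij eqxx.
- by have := rcoset_Ab_aX_neq i.+1; rewrite eq_ij eqxx.
move/rcoset_Ab_aX_inj/eqP: eq_ij.
rewrite eq_expg_mod_order order_a -[i.+1]addn1 -[j.+1]addn1 eqn_modDr.
by rewrite !modn_small ?ltn_pt_n // => /eqP; apply: val_inj.
Qed.

Lemma coset_label_onto C : C \in rcosets A G -> exists i, coset_label i = C.
Proof.
have -> : rcosets A G = coset_label @: setT.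
  apply/esym/eqP; rewrite eqEcard card_rcosets_A (card_imset _ coset_label_inj) cardsT card_ord.
  rewrite leqnn andbT; apply/subsetP=> _ /imsetP[i _ ->]; apply: coset_label_in.
by case/imsetP=> i _ ->; exists i.
Qed.

Lemma coset_label_pt_n : coset_label (pt_n m) = A.
Proof. by rewrite /coset_label eqxx. Qed.

Lemma coset_label_pt_n1 : coset_label (pt_n1 m) = A :* b.
Proof.
by rewrite /coset_label eq_sym (negPf (pt_n_neq_pt_n1 m)) -order_a expg_order mulg1.
Qed.

Lemma coset_label_sigma x : coset_label (sigma x) = coset_label x :* a.
Proof.
rewrite /coset_label; have [x_n | x_n] := eqVneq x (pt_n m).
  have -> : sigma x = x by apply: val_inj; rewrite sigmaE x_n ltnn.
  by rewrite x_n eqxx rcoset_id ?cycle_id.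
have sigma_x : sigma x != pt_n m by rewrite -ltn_pt_n sigmaE ltn_pt_n x_n ltn_pmod.
rewrite (negPf sigma_x) -rcosetM -mulgA -expgSr sigmaE ltn_pt_n x_n.
congr (_ :* (_ * _)); apply/eqP; rewrite eq_expg_mod_order order_a.
by rewrite -[(_ %% _).+1]addn1 modnDml addn1.
Qed.

Lemma coset_label_sigmaX k x : coset_label ((sigma ^+ k) x) = coset_label x :* a ^+ k.
Proof.
elim: k => [|k IHk]; first by rewrite !expg0 perm1 rcoset1.
by rewrite expgSr permM coset_label_sigma IHk -rcosetM -expgSr.
Qed.

Definition tau_fun (i : 'I_m.+2) := odflt i [pick j | coset_label j == coset_label i :* b].

Lemma coset_label_tau_fun i : coset_label (tau_fun i) = coset_label i :* b.
Proof.
rewrite /tau_fun; case: pickP => [j /eqP // | none].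
have : coset_label i :* b \in rcosets A G.
  by case/rcosetsP: (coset_label_in i) => x Gx ->; rewrite -rcosetM in_rcosets ?groupM.
by case/coset_label_onto=> j j_def; move: (none j); rewrite j_def eqxx.
Qed.

Lemma tau_fun_inj : injective tau_fun.
Proof.
move=> i j eq_ij; apply: coset_label_inj; apply: (@rcoset_inj _ b).
by rewrite -!coset_label_tau_fun eq_ij.
Qed.

Definition tau_of_b : 'S_m.+2 := perm tau_fun_inj.

Lemma coset_label_tau x : coset_label (tau_of_b x) = coset_label x :* b.
Proof. by rewrite permE coset_label_tau_fun. Qed.

Lemma tau_of_bK : tau_of_b * tau_of_b = 1.
Proof.
apply/permP=> x; rewrite perm1; apply: coset_label_inj.
by rewrite permM !coset_label_tau -rcosetM b_involution rcoset1.
Qed.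

Lemma tau_of_b_pt_n : tau_of_b (pt_n m) = pt_n1 m.
Proof. by apply: coset_label_inj; rewrite coset_label_tau coset_label_pt_n coset_label_pt_n1. Qed.

Lemma tau_of_b_relation (i : 'I_m.+2) : i < m ->
  tau_of_b * sigma ^+ i.+1 * tau_of_b =
  sigma ^+ (tau_of_b (rho (tau_of_b i))).+1 * tau_of_b * sigma ^+ (tau_of_b i).+1.
Proof.
(* Both sides act on the coset labels as right multiplications, which agree on A and A b. *)
move=> lt_im; set k := (tau_of_b (rho (tau_of_b i))).+1; set j := (tau_of_b i).+1.
set g1 := b * a ^+ i.+1 * b; set g2 := a ^+ k * b * a ^+ j.
have label_lhs y : coset_label ((tau_of_b * sigma ^+ i.+1 * tau_of_b) y) = coset_label y :* g1.
  by rewrite !permM coset_label_tau coset_label_sigmaX coset_label_tau !rcosetM.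
have label_rhs y : coset_label ((sigma ^+ k * tau_of_b * sigma ^+ j) y) = coset_label y :* g2.
  by rewrite !permM coset_label_sigmaX coset_label_tau coset_label_sigmaX !rcosetM.
have [at_n at_n1] := tau_relation_at_base sigmaE rhoE tau_of_bK tau_of_b_pt_n lt_im.
have g12 : g1 = g2.
  apply: G_eq_of_rcosets; rewrite ?groupM ?groupX //.
    by rewrite -coset_label_pt_n -label_lhs -label_rhs at_n.
  by rewrite -coset_label_pt_n1 -label_lhs -label_rhs at_n1.
by apply/permP=> y; apply: coset_label_inj; rewrite label_lhs label_rhs g12.
Qed.

Lemma tau_of_b_cond : tau_cond sigma rho tau_of_b.
Proof.
by apply/tau_condE; split; [exact: tau_of_bK | exact: tau_of_b_pt_n | exact: tau_of_b_relation].
Qed.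

End Necessity.

Section Colouring.

Variables (gT : finGroupType) (G : {group gT}) (S : seq gT) (m : nat).
Variable f : IKV m.+2 -> 'I_(size S) * {set gT}.
Hypothesis f_onto : f @: IK_verts m.+2 = phi_verts G S true.
Hypothesis f_mult :
  {in IK_verts m.+2 &, forall u v, phi_mult (f u) (f v) = IK_mult u v}.

Lemma inl_IK_verts p : inl p \in IK_verts m.+2.
Proof. by rewrite inE. Qed.

Lemma inr_IK_verts (e : {set 'I_m.+2}) : #|e| = 2 -> inr e \in IK_verts m.+2.
Proof. by rewrite inE => ->. Qed.

Lemma colour_adjacent u v : u \in IK_verts m.+2 -> v \in IK_verts m.+2 ->
  IK_mult u v = 1%N -> (f u).1 != (f v).1.
Proof. by move=> u_in v_in uv; have := f_mult u_in v_in; rewrite uv /phi_mult; case: ifP. Qed.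

Definition is_point (w : IKV m.+2) := if w is inl _ then true else false.

(* Any three subgroups <[s]> of distinct members are pairwise adjacent in Phi(G, S),
   which is impossible in the bipartite IK_n. *)
Lemma two_colours (i0 j0 x : 'I_(size S)) : i0 != j0 -> x = i0 \/ x = j0.
Proof.
move=> i0j0; have [-> | x_i0] := eqVneq x i0; first by left.
have [-> | x_j0] := eqVneq x j0; first by right.
have base_vertex (y : 'I_(size S)) : exists2 w, w \in IK_verts m.+2 & f w = (y, <[nth 1 S y]>).
  have : (y, <[nth 1 S y]>) \in f @: IK_verts m.+2.
    by rewrite f_onto inE self_in_rcosets.
  by case/imsetP=> w w_in ->; exists w.
have sides (y z : 'I_(size S)) wy wz : y != z -> wy \in IK_verts m.+2 -> wz \in IK_verts m.+2 ->
    f wy = (y, <[nth 1 S y]>) -> f wz = (z, <[nth 1 S z]>) -> is_point wy != is_point wz.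
  move=> yz wy_in wz_in fy fz.
  have : 0 < IK_mult wy wz.
    by rewrite -f_mult // fy fz /phi_mult /= yz; apply/card_gt0P; exists 1; rewrite inE !group1.
  by case: wy {wy_in fy} => [?|?]; case: wz {wz_in fz} => [?|?].
have [wx wx_in fx] := base_vertex x; have [w0 w0_in f0] := base_vertex i0.
have [wj wj_in fj] := base_vertex j0.
move: (sides _ _ _ _ x_i0 wx_in w0_in fx f0) (sides _ _ _ _ x_j0 wx_in wj_in fx fj).
move: (sides _ _ _ _ i0j0 w0_in wj_in f0 fj).
by case: (is_point wx); case: (is_point w0); case: (is_point wj).
Qed.

Lemma colour_classes : exists i0 j0, [/\ i0 != j0,
  forall p, (f (inl p)).1 = i0 & forall e : {set 'I_m.+2}, #|e| = 2 -> (f (inr e)).1 = j0].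
Proof.
pose p0 : 'I_m.+2 := ord0; pose i0 := (f (inl p0)).1.
have e0_2 : #|[set p0; pt_n m]| = 2 by rewrite cards2.
pose j0 := (f (inr [set p0; pt_n m])).1.
have i0j0 : i0 != j0.
  by apply: colour_adjacent; rewrite ?inl_IK_verts ?inr_IK_verts //= !inE eqxx.
have opp_i0 x y : x != y -> y = i0 -> x = j0.
  by move=> xy y_i0; case: (two_colours x i0j0) => // x_i0; rewrite x_i0 y_i0 eqxx in xy.
have opp_j0 x y : x != y -> y = j0 -> x = i0.
  by move=> xy y_j0; case: (two_colours x i0j0) => // x_j0; rewrite x_j0 y_j0 eqxx in xy.
have colour_edge (e : {set 'I_m.+2}) p :
    #|e| = 2 -> p \in e -> (f (inl p)).1 = i0 -> (f (inr e)).1 = j0.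
  move=> e2 pe; apply: opp_i0.
  by apply: colour_adjacent; rewrite ?inl_IK_verts ?inr_IK_verts //= pe.
have colour_point p : (f (inl p)).1 = i0.
  have [-> // | p_p0] := eqVneq p p0.
  have e2 : #|[set p0; p]| = 2 by rewrite cards2 eq_sym p_p0.
  apply: (opp_j0 _ _ _ (colour_edge _ p0 e2 (setU11 _ _) erefl)).
  by apply: colour_adjacent; rewrite ?inl_IK_verts ?inr_IK_verts //= !inE eqxx orbT.
exists i0, j0; split=> // e e2.
have /card_gt0P[p pe] : 0 < #|e| by rewrite e2.
exact: (colour_edge e p).
Qed.

End Colouring.

Lemma IK_Ggraph_tau m (sigma rho : 'S_m.+2) : cycle_spec sigma -> rho_spec rho ->
  IK_is_Ggraph m.+2 -> exists tau, tau_cond sigma rho tau.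
Proof.
move=> sigmaE rhoE [gT [G [S [SG [f [f_inj f_onto f_mult]]]]]].
have [i0 [j0 [i0j0 col_p col_e]]] := colour_classes f_onto f_mult.
have f_in w : w \in IK_verts m.+2 -> f w \in phi_verts G S true by rewrite -f_onto; apply: imset_f.
have f_preim (i : 'I_(size S)) C : C \in rcosets <[nth 1 S i]> G ->
    exists2 w, w \in IK_verts m.+2 & f w = (i, C).
  move=> C_in; have : (i, C) \in f @: IK_verts m.+2 by rewrite f_onto inE.
  by case/imsetP=> w w_in fw; exists w.
eexists; apply: (tau_of_b_cond (a := nth 1 S i0) (b := nth 1 S j0)
  (pV := fun p => (f (inl p)).2) (pE := fun e => (f (inr e)).2)) => //.
- by apply/SG/mem_nth.
- by apply/SG/mem_nth.
- move=> p q /= eq_pq.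
  have : f (inl p) = f (inl q) by apply: injective_projections; rewrite /= ?col_p.
  by move/f_inj=> /(_ (inl_IK_verts p) (inl_IK_verts q)) [].
- move=> C C_in; have [[p|e] w_in fw] := f_preim i0 C C_in; first by exists p; rewrite fw.
  by move: w_in i0j0; rewrite inE => /eqP/col_e; rewrite fw /= => ->; rewrite eqxx.
- by move=> p; have := f_in _ (inl_IK_verts p); rewrite inE col_p.
- move=> D D_in; have [[p|e] w_in fw] := f_preim j0 D D_in; last first.
    by move: w_in; rewrite inE => /eqP e2; exists e; rewrite // fw.
  by move: i0j0; rewrite -(col_p p) fw eqxx.
- by move=> e e2; have := f_in _ (inr_IK_verts e2); rewrite inE col_e.
move=> p e e2 /=; have := f_mult _ _ (inl_IK_verts p) (inr_IK_verts e2).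
by rewrite /phi_mult col_p col_e // i0j0.
Qed.

Unset Implicit Arguments.
Set Strict Implicit.

Theorem theorem3 (n : nat) (sigma rho : 'S_n) :
  (2 <= n)%N ->
  (forall i : 'I_n, lab (sigma i) =
     (if lab i < n.-1 then (lab i).+1 else if lab i == n.-1 then 1 else n)%N) ->
  (forall i : 'I_n, lab (rho i) =
     (if lab i == n.-1 then n else if lab i == n then n.-1 else n.-1 - lab i)%N) ->
  (IK_is_Ggraph n <-> exists tau : 'S_n, tau_cond sigma rho tau) /\
  (forall tau : 'S_n, tau_cond sigma rho tau ->
     mg_iso (IK_verts n) (@IK_mult n)
       (phi_verts <<[set sigma; tau]>> [:: sigma; tau] false)
       (@phi_mult _ [:: sigma; tau])).
Proof.
case: n sigma rho => [|[|m]] // sigma rho _ /cycle_spec_lab sigmaE /rho_spec_lab rhoE.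
split=> [|tau]; last exact: tau_cond_IK_iso.
split=> [|[tau tau_c]]; first exact: IK_Ggraph_tau.
exists _, <<[set sigma; tau]>>%G, [:: sigma; tau]; split.
  by move=> x; rewrite !inE => /orP[] /eqP->; [apply: sigma_in_G | apply: tau_in_G].
by apply/mg_iso_phi_rcosets/(tau_cond_IK_iso sigmaE tau_c).
Qed.
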